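(* Let $G=(V,E,w)$ be a finite connected weighted graph and $(x,y)\in E$. Let $\mathbf d,\mathbf d'$ be two vectors of positive edge lengths on $E$ which differ only on the edge $(x,y)$, with $d(x,y)\le d'(x,y)$. Then for every function $g:V\to\mathbb R$ that is $1$-Lipschitz with respect to $\mathbf d'$ and satisfies $g(y)-g(x)=d'(x,y)$, there exists a function $g':V\to\mathbb R$ that is $1$-Lipschitz with respect to $\mathbf d$, satisfies $g'(y)-g'(x)=d(x,y)$, and satisfies $d(x,y)-d'(x,y)\le g'(z)-g(z)\le 0$ for all $z\in V$.
   Context: A function $f:V\to\mathbb R$ is $1$-Lipschitz with respect to an edge-length vector $\mathbf d$ (written $f\in Lip(1)$) if $|f(s)-f(t)|\le d(s,t)$ for every edge $(s,t)\in E$. *)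

From HB Require Import structures.
From mathcomp Require Import all_boot all_order all_algebra.
From mathcomp Require Import reals.
Set Implicit Arguments. Unset Strict Implicit. Unset Printing Implicit Defensive.
Import Order.TTheory GRing.Theory Num.Theory.
Local Open Scope ring_scope.

Definition simple_graph (V : finType) (e : rel V) : Prop :=
  symmetric e /\ irreflexive e.

Definition connected_graph (V : finType) (e : rel V) : Prop :=
  forall s t : V, connect e s t.

(* Edge weights / edge lengths: a function on pairs, meaningful on edges,
   symmetric and positive on edges (undirected edges). *)
Definition edge_positive (R : realType) (V : finType) (e : rel V)
  (d : V -> V -> R) : Prop :=
  forall s t, e s t -> 0 < d s t /\ d s t = d t s.

Definition Lip1 (R : realType) (V : finType) (e : rel V)
  (d : V -> V -> R) (f : V -> R) : Prop :=
  forall s t, e s t -> `|f s - f t| <= d s t.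

Definition differ_only_on (R : realType) (V : finType) (e : rel V)
  (d d' : V -> V -> R) (x y : V) : Prop :=
  forall s t, e s t -> ~ ((s = x /\ t = y) \/ (s = y /\ t = x)) -> d s t = d' s t.

From HB Require Import structures.
From mathcomp Require Import all_boot all_order all_algebra.
From mathcomp Require Import reals lra.
Import Order.TTheory GRing.Theory Num.Theory.
Set Implicit Arguments.
Local Open Scope ring_scope.

(* Take [g' = clip \o g] with [clip t = max (t - delta) (min t c)], where
   [delta = d'(x,y) - d(x,y)] and [c = g x + d(x,y)].  The map [clip] is
   nondecreasing and 1-Lipschitz, and lowers every value by at most [delta];
   it fixes [g x <= c] and sends [g y = c + delta] to [c].  Hence [g'] keeps
   the Lipschitz bound on every edge where [d = d'], and on the edge [(x,y)]
   it rises by exactly [d(x,y)]. *)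

Section Clip.

Context {R : realFieldType} (delta c : R).

Definition clip (t : R) : R := Num.max (t - delta) (Num.min t c).

Lemma clip_increment a b : a <= b -> 0 <= clip b - clip a <= b - a.
Proof.
move=> le_ab; rewrite /clip.
case: (leP a c) => ?; case: (leP b c) => ?;
case: (leP (a - delta)) => ?; case: (leP (b - delta)) => ?; lra.
Qed.

Lemma clip_nonexpansive a b : `|clip a - clip b| <= `|a - b|.
Proof.
wlog le_ab : a b / a <= b.
  move=> clip_le; case: (leP a b) => [/clip_le //|/ltW /clip_le].
  by rewrite distrC [`|a - b|]distrC.
have /andP[inc_ge0 inc_le] := clip_increment a b le_ab.
by rewrite distrC [`|a - b|]distrC !ger0_norm // subr_ge0.
Qed.

Lemma clip_shift t : 0 <= delta -> - delta <= clip t - t <= 0.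
Proof.
by move=> ?; rewrite /clip; case: (leP t c) => ?; case: (leP (t - delta)) => ?; lra.
Qed.

Lemma clip_id t : 0 <= delta -> t <= c -> clip t = t.
Proof. by move=> ? le_tc; rewrite /clip min_l // max_r //; lra. Qed.

Lemma clip_top t : c <= t <= c + delta -> clip t = c.
Proof. by case/andP=> le_ct ?; rewrite /clip min_r // max_r //; lra. Qed.

End Clip.

Lemma Lip1_comp (R : realType) (V : finType) (e : rel V) (d : V -> V -> R)
    (h : R -> R) (g : V -> R) :
  (forall a b, `|h a - h b| <= `|a - b|) -> Lip1 e d g -> Lip1 e d (h \o g).
Proof.
by move=> h_nonexp g_lip s t est; apply: le_trans (h_nonexp _ _) (g_lip s t est).
Qed.

Lemma Lip1_differ_only_on (R : realType) (V : finType) (e : rel V)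
    (d d' : V -> V -> R) (x y : V) (f : V -> R) :
  differ_only_on e d d' x y -> d y x = d x y -> `|f x - f y| <= d x y ->
  Lip1 e d' f -> Lip1 e d f.
Proof.
move=> dd' dyx fxy f_lip s t est.
have [/orP[] /andP[/eqP-> /eqP->] // | not_xy] :=
  boolP [|| (s == x) && (t == y) | (s == y) && (t == x)].
  by rewrite distrC dyx.
rewrite (dd' s t est) ?f_lip // => -[] [s_eq t_eq].
all: by move: not_xy; rewrite s_eq t_eq !eqxx ?orbT.
Qed.

Theorem lemma5p2 (R : realType) (V : finType) (e : rel V) (w : V -> V -> R)
  (x y : V) (d d' : V -> V -> R) :
  simple_graph e -> connected_graph e -> edge_positive e w ->
  e x y ->
  edge_positive e d -> edge_positive e d' ->
  differ_only_on e d d' x y ->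
  d x y <= d' x y ->
  forall g : V -> R, Lip1 e d' g -> g y - g x = d' x y ->
  exists g' : V -> R,
    [/\ Lip1 e d g', g' y - g' x = d x y &
        forall z : V, d x y - d' x y <= g' z - g z /\ g' z - g z <= 0].
Proof.
move=> _ _ _ exy d_pos _ dd' le_dd' g g_lip gxy.
set delta := d' x y - d x y; set c := g x + d x y.
have delta_ge0 : 0 <= delta by rewrite subr_ge0.
have [dxy_gt0 dyx] := d_pos x y exy.
have clip_gx : clip delta c (g x) = g x by apply: clip_id => //; rewrite /c; lra.
have clip_gy : clip delta c (g y) = c by apply: clip_top; rewrite /c /delta; lra.
exists (clip delta c \o g); split => [|/=|z /=].
- apply: Lip1_differ_only_on dd' (esym dyx) _
    (Lip1_comp (clip delta c) (clip_nonexpansive delta c) g_lip).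
  by rewrite /= clip_gx clip_gy /c opprD addrA subrr add0r normrN gtr0_norm.
- by rewrite clip_gx clip_gy /c addrC addKr.
- by have := clip_shift delta c (g z) delta_ge0; rewrite /delta; lra.
Qed.
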